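(* Let $q$ be a power of $2$, let $f\in\mathbb{F}_q[x]$ be monic of degree $m\ge1$, and let $h(x)=x^mf(x+x^{-1})$. Then $1$ is a root of $h$ if and only if $f(0)=0$, and in that case this root of $h$ has multiplicity two if and only if $0$ has multiplicity one as a root of $f$. All roots of $h$ different from $1$ are simple if and only if all roots of $f$ different from $0$ are simple. *)

From mathcomp Require Import all_boot all_order all_algebra all_field.
Set Implicit Arguments. Unset Strict Implicit. Unset Printing Implicit Defensive.
Import GRing.Theory.
Local Open Scope ring_scope.

(* h(x) = x^m f(x + x^{-1}) with m = deg f, written as a polynomial:
   x^m * sum_i f_i (x + 1/x)^i = sum_i f_i x^(m-i) (x^2+1)^i. *)
Definition recip_transform (F : fieldType) (f : {poly F}) : {poly F} :=
  \sum_(i < size f) f`_i *: ('X^((size f).-1 - i) * ('X^2 + 1) ^+ i).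

From mathcomp Require Import all_boot all_order all_algebra all_field.
From mathcomp Require Import zify ring.
Set Implicit Arguments. Unset Strict Implicit.
Import GRing.Theory.
Local Open Scope ring_scope.

(* Over an algebraic closure write f = prod (X - y).  Then
   x^m f(x + 1/x) = prod (x^2 + 1 - y x), and in characteristic 2 the factor
   x^2 + 1 - y x is (x - 1)^2 when y = 0, and (x - z)(x - 1/z) with z != 1/z
   when y = z + 1/z != 0.  Hence 1 is a root of h of twice the multiplicity of
   0 in f, and any other root z of h has the multiplicity of z + 1/z in f;
   since z |-> z + 1/z maps the complement of {0, 1} onto the complement of
   {0} (and 0 is never a root of h), simplicity transfers both ways. *)

Section RecipTransform.
Variable R : comNzRingType.
Implicit Types (p : {poly R}) (c : R).

Definition recip_transformn n p : {poly R} :=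
  \sum_(i < n.+1) p`_i *: ('X^(n - i) * ('X^2 + 1) ^+ i).

(* The image x^2 + 1 - c x = x ((x + 1/x) - c) of the linear factor X - c. *)
Definition recip_factor c : {poly R} := 'X^2 + 1 - c *: 'X.

Lemma recip_transformnM_XsubC n p c : (size p <= n.+1)%N ->
  recip_transformn n.+1 (p * ('X - c%:P)) =
  recip_factor c * recip_transformn n p.
Proof.
move=> size_p; rewrite /recip_transformn.
have coefM_XsubC i : (p * ('X - c%:P))`_i = (p * 'X)`_i - c * p`_i.
  by rewrite mulrBr coefB coefMC [_ * c]mulrC.
under eq_bigr do rewrite coefM_XsubC scalerBl.
rewrite sumrB big_ord_recl coefMX eqxx scale0r add0r.
rewrite [X in _ - X]big_ord_recr /= [p`_n.+1]nth_default // mulr0 scale0r addr0.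
rewrite /recip_factor mulrBl !mulr_sumr; congr (_ - _); apply: eq_bigr => i _.
  by rewrite coefMX /= subSS -scalerAr mulrCA -exprS.
by rewrite subSn ?leq_ord // exprS -scalerA -!scalerAl -scalerAr mulrA.
Qed.

Lemma recip_transformnM_prod_XsubC n p (r : seq R) : (size p <= n.+1)%N ->
  recip_transformn (n + size r) (p * \prod_(y <- r) ('X - y%:P)) =
  \prod_(y <- r) recip_factor y * recip_transformn n p.
Proof.
move=> size_p; elim: r => [|y r IHr].
  by rewrite !big_nil addn0 !mulr1 mul1r.
have size_pr : (size (p * \prod_(z <- r) ('X - z%:P))%R <= (n + size r).+1)%N.
  by apply: (leq_trans (size_polyMleq _ _)); rewrite size_prod_XsubC; lia.
rewrite !big_cons /= addnS mulrCA mulrC recip_transformnM_XsubC // IHr.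
by rewrite mulrA.
Qed.

Lemma recip_transformn_prod_XsubC (r : seq R) :
  recip_transformn (size r) (\prod_(y <- r) ('X - y%:P)) =
  \prod_(y <- r) recip_factor y.
Proof.
rewrite -[size r]add0n -[\prod_(y <- r) _]mul1r recip_transformnM_prod_XsubC.
  by rewrite /recip_transformn big_ord1 coef1 expr0 mulr1 scale1r mulr1.
by rewrite size_poly1.
Qed.

Lemma recip_transformnMXn n p k : (size p <= n.+1)%N ->
  recip_transformn (n + k) (p * 'X^k) = ('X^2 + 1) ^+ k * recip_transformn n p.
Proof.
have prod_nseq0 (F : R -> {poly R}) : \prod_(y <- nseq k 0) F y = F 0 ^+ k.
  by rewrite big_nseq; elim: k => //= k ->; rewrite exprS.
move=> size_p; rewrite -[k in (n + k)%N](size_nseq k (0 : R)).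
have -> : 'X^k = \prod_(y <- nseq k 0) ('X - y%:P) :> {poly R}.
  by rewrite prod_nseq0 polyC0 subr0.
rewrite recip_transformnM_prod_XsubC // prod_nseq0.
by rewrite /recip_factor scale0r subr0.
Qed.

Lemma horner1_recip_transformn n p : (size p <= n.+1)%N ->
  (recip_transformn n p).[1] = p.[2%:R].
Proof.
move=> size_p; rewrite (horner_coef_wide _ size_p) horner_sum.
apply: eq_bigr => i _.
rewrite hornerZ hornerM !horner_exp hornerD hornerXn hornerX hornerC.
by rewrite !expr1n mul1r.
Qed.

Lemma size_recip_factor c : size (recip_factor c) = 3%N.
Proof.
rewrite /recip_factor -addrA size_polyDl size_polyXn //.
rewrite (leq_ltn_trans (size_polyD _ _)) // size_poly1 size_polyN gtn_max /=.
by rewrite (leq_ltn_trans (size_scale_leq _ _)) // size_polyX.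
Qed.

Lemma recip_factor_neq0 c : recip_factor c != 0.
Proof. by rewrite -size_poly_eq0 size_recip_factor. Qed.

Lemma horner0_recip_factor c : (recip_factor c).[0] = 1.
Proof. by rewrite /recip_factor !hornerE expr0n add0r subr0. Qed.

End RecipTransform.

Lemma recip_transformE (F : fieldType) (f : {poly F}) :
  recip_transform f = recip_transformn (size f).-1 f.
Proof.
have [->|f0] := eqVneq f 0.
  rewrite /recip_transform /recip_transformn size_poly0 big_ord0 big_ord1.
  by rewrite coef0 scale0r.
by rewrite /recip_transform /recip_transformn prednK // lt0n size_poly_eq0.
Qed.

Lemma map_recip_transform (F L : fieldType) (iota : {rmorphism F -> L})
    (f : {poly F}) :
  map_poly iota (recip_transform f) = recip_transform (map_poly iota f).
Proof.
rewrite /recip_transform size_map_poly rmorph_sum; apply: eq_bigr => i _.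
rewrite /= map_polyZ rmorphM !rmorphXn /= rmorphD /= map_polyXn rmorph1.
by rewrite map_polyX coef_map.
Qed.

Lemma sqrrB1_pchar2 (R : nzRingType) (x : R) : 2%N \in [pchar R] ->
  (x - 1) ^+ 2 = x ^+ 2 + 1.
Proof. by move=> pchar2; rewrite sqrrB1 mulr2n addrr_pchar2 // subr0. Qed.

Section RecipTransformField.
Variable F : fieldType.
Implicit Types (y z : F).

Lemma horner_recip_factor y z : z != 0 ->
  (recip_factor y).[z] = z * (z + z^-1 - y).
Proof. by move=> z0; rewrite /recip_factor !hornerE; field. Qed.

Lemma recip_factor_addfV z : z != 0 ->
  recip_factor (z + z^-1) = ('X - z%:P) * ('X - z^-1%:P).
Proof.
move=> z0; rewrite /recip_factor -[1 in LHS]polyC1 -(mulfV z0) polyCM.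
by rewrite -mul_polyC polyCD; ring.
Qed.

Hypothesis pchar2 : 2%N \in [pchar F].

Lemma pchar2_sqrf_eq1 z : (z ^+ 2 == 1) = (z == 1).
Proof.
by rewrite -subr_eq0 oppr_pchar2 // -sqrrB1_pchar2 // expf_eq0 /= subr_eq0.
Qed.

Lemma pchar2_invf_eq z : z != 0 -> (z^-1 == z) = (z == 1).
Proof.
move=> z0; rewrite -(inj_eq (mulfI z0)) mulfV // eq_sym -expr2.
exact: pchar2_sqrf_eq1.
Qed.

Lemma pchar2_addfV_eq0 z : z != 0 -> (z + z^-1 == 0) = (z == 1).
Proof. by move=> z0; rewrite addr_eq0 oppr_pchar2 // eq_sym pchar2_invf_eq. Qed.

Lemma mup_recip_factor y z : z != 0 -> z != 1 ->
  mup z (recip_factor y) = (y == z + z^-1) :> nat.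
Proof.
move=> z0 z1; have [->|yNz] := eqVneq y (z + z^-1); last first.
  rewrite mupNroot // /root horner_recip_factor // mulf_eq0 (negbTE z0).
  by rewrite subr_eq0 eq_sym.
have -> : recip_factor (z + z^-1) = \prod_(w <- [:: z; z^-1]) ('X - w%:P).
  by rewrite big_cons big_seq1 recip_factor_addfV.
by rewrite mu_prod_XsubC /= eqxx pchar2_invf_eq // (negbTE z1).
Qed.

Lemma mup_prod_recip_factor (r : seq F) z : z != 0 -> z != 1 ->
  mup z (\prod_(y <- r) recip_factor y) = count_mem (z + z^-1) r.
Proof.
move=> z0 z1; elim: r => [|y r IHr]; first by rewrite big_nil mupNroot ?root1.
rewrite big_cons mupM ?recip_factor_neq0 ?mup_recip_factor ?IHr //.
by rewrite prodf_seq_neq0; apply/allP => x _; rewrite recip_factor_neq0.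
Qed.

Lemma horner1_recip_transform (f : {poly F}) :
  (recip_transform f).[1] = f.[0].
Proof.
by rewrite recip_transformE horner1_recip_transformn ?leqSpred // pcharf0.
Qed.

Lemma mup1_recip_transform (f : {poly F}) : f != 0 ->
  mup 1 (recip_transform f) = (mup 0 f).*2.
Proof.
move=> f0; have [k [g /implyP/(_ f0) g0 ef]] := multiplicity_XsubC f 0.
have g_neq0 : g != 0 by apply: contraNneq g0 => ->; rewrite root0.
have -> : mup 0 f = k by rewrite ef mupMr // mup_XsubCX eqxx.
have size_gXk : (size (g * 'X^k)).-1 = ((size g).-1 + k)%N.
  by rewrite size_mulXn //; have := size_poly_gt0 g; rewrite g_neq0; lia.
rewrite recip_transformE ef polyC0 subr0 size_gXk.
rewrite recip_transformnMXn ?leqSpred //.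
have pchar2_poly : 2%N \in [pchar {poly F}] by rewrite pchar_poly.
rewrite -sqrrB1_pchar2 // -exprM -polyC1 mupMl ?mup_XsubCX ?eqxx ?mul2n //.
by rewrite /root horner1_recip_transformn ?leqSpred // pcharf0 // -horner_coef0.
Qed.

End RecipTransformField.

Lemma closed_field_addfV (L : closedFieldType) (y : L) :
  exists2 z, z != 0 & y = z + z^-1.
Proof.
have [z rz] : exists z, root (recip_factor y) z.
  by apply/closed_rootP; rewrite size_recip_factor.
have z0 : z != 0.
  by apply: contraTneq rz => ->; rewrite /root horner0_recip_factor oner_eq0.
exists z => //; move: rz.
by rewrite /root horner_recip_factor // mulf_eq0 (negbTE z0) subr_eq0 => /eqP.
Qed.

Lemma mup_leq1_roots (F : fieldType) (p : {poly F}) (P : pred F) : p != 0 ->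
  (forall z, P z -> root p z -> mup z p = 1%N) <->
  (forall z, P z -> (mup z p <= 1)%N).
Proof.
move=> p0; have rootE z : root p z = (0 < mup z p)%N.
  by rewrite -XsubC_dvd // dvdp_XsubCl.
split=> simple z Pz; last by rewrite rootE => mup_gt0; have := simple z Pz; lia.
by move: (simple z Pz); rewrite rootE; case: (mup z p) => [|n] // /(_ isT) ->.
Qed.

Lemma recip_transform_simple_roots (L : closedFieldType)
    (pchar2 : 2%N \in [pchar L]) (g : {poly L}) : g \is monic ->
  (forall z, z != 1 -> root (recip_transform g) z ->
     mup z (recip_transform g) = 1%N) <->
  (forall y, y != 0 -> root g y -> mup y g = 1%N).
Proof.
move=> g_monic; have [r g_prod] := closed_field_poly_normal g.
rewrite (monicP g_monic) scale1r in g_prod.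
have h_prod : recip_transform g = \prod_(y <- r) recip_factor y.
  rewrite recip_transformE g_prod size_prod_XsubC.
  exact: recip_transformn_prod_XsubC.
have h_neq0 : recip_transform g != 0.
  rewrite h_prod prodf_seq_neq0.
  by apply/allP => y _; rewrite recip_factor_neq0.
rewrite (mup_leq1_roots (fun z => z != 1) h_neq0).
rewrite (mup_leq1_roots (fun y => y != 0) (monic_neq0 g_monic)).
rewrite h_prod g_prod; split=> simple y.
  have [z z0 ->] := closed_field_addfV y; rewrite pchar2_addfV_eq0 // => z1.
  by rewrite mu_prod_XsubC -mup_prod_recip_factor //; apply: simple.
move=> y1; have [->|y0] := eqVneq y 0.
  rewrite mupNroot // /root horner_prod big1_seq ?oner_eq0 // => x _.
  exact: horner0_recip_factor.
rewrite mup_prod_recip_factor // -mu_prod_XsubC; apply: simple.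
by rewrite pchar2_addfV_eq0.
Qed.

Theorem lemma2p12 (F : finFieldType) (hchar : 2%N \in [pchar F])
    (f : {poly F}) (hmon : f \is monic) (hdeg : (1 <= (size f).-1)%N) :
  let h := recip_transform f in
  (root h 1 <-> f.[0] = 0) /\
  (f.[0] = 0 -> (mup 1 h = 2%N <-> mup 0 f = 1%N)) /\
  (forall (L : closedFieldType) (iota : {rmorphism F -> L}),
     (forall z : L, z != 1 -> root (map_poly iota h) z ->
        mup z (map_poly iota h) = 1%N) <->
     (forall y : L, y != 0 -> root (map_poly iota f) y ->
        mup y (map_poly iota f) = 1%N)).
Proof.
move=> h; have f0 := monic_neq0 hmon.
split; first by rewrite /root horner1_recip_transform //; split=> /eqP.
split; first by move=> _; rewrite mup1_recip_transform //; split; lia.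
move=> L iota; rewrite map_recip_transform.
apply: recip_transform_simple_roots; last by rewrite map_monic.
exact: (rmorph_pchar iota).
Qed.
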